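(* Let $\mathcal H$ be an infinite-dimensional complex Hilbert space and let $\mathcal B_f(\mathcal H)$ be the set of bounded forms in $\mathcal V_f(\mathcal H)$. Then $(\mathcal B_f(\mathcal H);\oplus_{|\mathcal B_f(\mathcal H)},o)$ is a sub-generalized effect algebra of the generalized effect algebra $(\mathcal V_f(\mathcal H);\oplus,o)$.
   Context: Bilinear forms $t$ on $\mathcal H$ are sesquilinear maps $D(t)\times D(t)\to\mathbb C$ on a dense linear subspace $D(t)$ (linear in the first argument); $t$ is positive if $t(x,x)\ge0$ on $D(t)$, bounded if $\sup\{t(x,x)\mid x\in D(t),\|x\|=1\}<\infty$. The sum $t+s$ has domain $D(t)\cap D(s)$. $o$ is the zero form on $\mathcal H$. $\mathcal V_f(\mathcal H)$ is the set of positive bilinear forms $t$ with dense domain such that $D(t)=\mathcal H$ whenever $t$ is bounded; $t\oplus s$ is defined iff $t$ or $s$ is bounded or $D(t)=D(s)$, and then $t\oplus s=t+s$; this makes $(\mathcal V_f(\mathcal H);\oplus,o)$ a generalized effect algebra (partial commutative, associative operation with neutral element $0$, cancellation, and $x\oplus y=0\Rightarrow x=y=0$). A subset $Q$ of a generalized effect algebra $E$ is a sub-generalized effect algebra if $0\in Q$ and whenever $x\oplus y=z$ in $E$ with at least two of $x,y,z$ in $Q$, then all of $x,y,z$ lie in $Q$. For $Q\subseteq E$, $x\oplus_{|Q}y$ is defined iff $x\oplus y$ is defined in $E$ and lies in $Q$, and then equals $x\oplus y$. *)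

From HB Require Import structures.
From mathcomp Require Import all_boot all_order all_algebra.
From mathcomp Require Import boolp classical_sets reals.
From mathcomp Require Import complex.
Set Implicit Arguments. Unset Strict Implicit. Unset Printing Implicit Defensive.
Import Order.TTheory GRing.Theory Num.Theory.
Local Open Scope ring_scope.
Local Open Scope classical_set_scope.

Section Hilbert.
Variable R : realType.
Local Notation C := R[i].
Variable V : lmodType C.
Variable ip : V -> V -> C.

Definition ipnorm (x : V) : R := Num.sqrt (complex.Re (ip x x)).

Definition is_cauchy (u : nat -> V) : Prop :=
  forall e : R, 0 < e -> exists N, forall m n, (N <= m)%N -> (N <= n)%N ->
    ipnorm (u m - u n) < e.
Definition converges_to (u : nat -> V) (l : V) : Prop :=
  forall e : R, 0 < e -> exists N, forall n, (N <= n)%N -> ipnorm (u n - l) < e.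

Definition is_hilbert : Prop :=
  [/\ (forall (a : C) (x y z : V), ip (a *: x + y) z = a * ip x z + ip y z),
      (forall x y : V, ip y x = (ip x y)^*),
      (forall x : V, 0 <= ip x x),
      (forall x : V, ip x x = 0 -> x = 0)
    & (forall u, is_cauchy u -> exists l, converges_to u l)].

Definition infinite_dim : Prop :=
  forall k : nat, exists v : 'I_k -> V,
    forall a : 'I_k -> C, \sum_(j < k) a j *: v j = 0 -> forall j, a j = 0.

Definition dense_subspace (D : set V) : Prop :=
  [/\ D 0,
      (forall (a : C) x y, D x -> D y -> D (a *: x + y))
    & (forall x (e : R), 0 < e -> exists2 y, D y & ipnorm (x - y) < e)].

(* A bilinear form: a domain and a value; values outside D x D are
   normalized to 0 so that Leibniz equality of forms is form equality. *)
Record form := Form { fdom : set V; fval : V -> V -> C }.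

Definition is_form (t : form) : Prop :=
  [/\ dense_subspace (fdom t),
      (forall (a : C) x y z, fdom t x -> fdom t y -> fdom t z ->
          fval t (a *: x + y) z = a * fval t x z + fval t y z),
      (forall (a : C) x y z, fdom t x -> fdom t y -> fdom t z ->
          fval t z (a *: x + y) = a^* * fval t z x + fval t z y)
    & (forall x y, ~ (fdom t x /\ fdom t y) -> fval t x y = 0)].

Definition positive_form (t : form) : Prop :=
  forall x, fdom t x -> 0 <= fval t x x.

Definition bounded_form (t : form) : Prop :=
  exists M : R, forall x, fdom t x -> ipnorm x = 1 -> fval t x x <= (M%:C)%C.

Definition oform : form := Form setT (fun _ _ => 0).

Definition fsum (t s : form) : form :=
  Form (fdom t `&` fdom s)
    (fun x y => if `[< (fdom t `&` fdom s) x /\ (fdom t `&` fdom s) y >]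
                then fval t x y + fval s x y else 0).

Definition Vf : set form :=
  [set t | is_form t /\ positive_form t /\ (bounded_form t -> fdom t = setT)].

Definition Bf : set form := [set t | Vf t /\ bounded_form t].

Definition oplus_defined (t s : form) : Prop :=
  bounded_form t \/ bounded_form s \/ fdom t = fdom s.
Definition oplus (t s : form) : form := fsum t s.

End Hilbert.

Definition sub_gea (T : Type) (E : set T) (defd : T -> T -> Prop)
    (op : T -> T -> T) (zero : T) (Q : set T) : Prop :=
  [/\ Q `<=` E, Q zero &
      forall x y z, E x -> E y -> E z -> defd x y -> op x y = z ->
        (Q x /\ Q y) \/ (Q x /\ Q z) \/ (Q y /\ Q z) -> [/\ Q x, Q y & Q z]].

From Pilot Require Import Defs.
From HB Require Import structures.
From mathcomp Require Import all_boot all_order all_algebra.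
From mathcomp Require Import boolp classical_sets reals.
From mathcomp Require Import complex.

(* Boundedness passes to sums, and from a sum t + s to a summand s: since t is
   positive, s(x,x) <= (t + s)(x,x) on D(t) /\ D(s), and when t is bounded
   D(t) is the whole space, so D(t + s) = D(s). *)

Set Implicit Arguments. Unset Strict Implicit. Unset Printing Implicit Defensive.
Import Order.TTheory GRing.Theory Num.Theory.
Local Open Scope ring_scope.
Local Open Scope classical_set_scope.

Section FormSum.
Variables (R : realType) (V : lmodType R[i]) (ip : V -> V -> R[i]).

Lemma fsumC (t s : Defs.form V) : fsum t s = fsum s t.
Proof.
rewrite /fsum setIC; congr Form; apply/funext => x; apply/funext => y.
by case: asboolP => // _; rewrite addrC.
Qed.

Lemma fsum_diag (t s : Defs.form V) x :
  fdom t x -> fdom s x -> fval (fsum t s) x x = fval t x x + fval s x x.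
Proof. by move=> tx sx /=; rewrite asboolT. Qed.

Lemma bounded_fsum (t s : Defs.form V) :
  bounded_form ip t -> bounded_form ip s -> bounded_form ip (fsum t s).
Proof.
move=> [Mt bt] [Ms bs]; exists (Mt + Ms) => x [tx sx] nx.
by rewrite fsum_diag // rmorphD /= lerD ?bt ?bs.
Qed.

Lemma bounded_fsum_r (t s : Defs.form V) : positive_form t -> fdom s `<=` fdom t ->
  bounded_form ip (fsum t s) -> bounded_form ip s.
Proof.
move=> t_ge0 sub_st [M bts]; exists M => x sx nx.
have tx := sub_st x sx.
apply: le_trans (bts x (conj tx sx) nx).
by rewrite fsum_diag // lerDr t_ge0.
Qed.

End FormSum.

Section BoundedForms.
Variables (R : realType) (V : lmodType R[i]) (ip : V -> V -> R[i]).
Hypothesis ip_hilbert : is_hilbert ip.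

Lemma ipnorm0 : ipnorm ip 0 = 0.
Proof.
have [ip_lin _ _ _ _] := ip_hilbert.
have ip00 : ip 0 0 = 0.
  by apply/(addrI (ip 0 0)); rewrite addr0 -{1}(mul1r (ip 0 0)) -ip_lin scale1r addr0.
by rewrite /ipnorm ip00 sqrtr0.
Qed.

Lemma Bf_oform : Bf ip (oform V).
Proof.
have bounded_o : bounded_form ip (oform V) by exists 0.
(do !split) => //= [x e e_gt0|a *|a *].
- by exists x => //; rewrite subrr ipnorm0.
- by rewrite mulr0 addr0.
- by rewrite mulr0 addr0.
Qed.

Lemma Bf_fdomT (t : Defs.form V) : Bf ip t -> fdom t = setT.
Proof. by case=> [[_ [_ bounded_domT]] tb]; apply: bounded_domT. Qed.

Lemma Bf_fsum (t s : Defs.form V) :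
  Vf ip (fsum t s) -> Bf ip t -> Bf ip s -> Bf ip (fsum t s).
Proof. by move=> Vts [_ tb] [_ sb]; split; last exact: bounded_fsum. Qed.

Lemma Bf_fsum_r (t s : Defs.form V) :
  Vf ip s -> Bf ip t -> Bf ip (fsum t s) -> Bf ip s.
Proof.
move=> Vs Bt [_ tsb]; split=> //; apply: bounded_fsum_r tsb.
- by case: Bt => [[_ []]].
- by rewrite (Bf_fdomT Bt).
Qed.

End BoundedForms.

Theorem theorem4p12 (R : realType) (V : lmodType R[i]) (ip : V -> V -> R[i])
  (HH : is_hilbert ip) (Hinf : infinite_dim V) :
  sub_gea (Vf ip) (@oplus_defined R V ip) (@oplus R V) (oform V) (Bf ip).
Proof.
split; [by move=> t [] | exact: Bf_oform |].
rewrite /oplus => x y z Vx Vy Vz _ xyz; subst z.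
case=> [[Bx By]|[[Bx Bz]|[By Bz]]].
- by split=> //; apply: Bf_fsum.
- by split=> //; exact: Bf_fsum_r Vy Bx Bz.
- have Bx : Bf ip x by rewrite fsumC in Bz; exact: Bf_fsum_r Vx By Bz.
  by split.
Qed.
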